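(* Let $I$ be an index set and $P_r,Q_r\in GL(n,\mathbb C)$ for $r\in I$. There exists a ($C^1$-)diffeomorphism $f\colon\mathbb C^n\to\mathbb C^n$ (of the underlying real space $\mathbb R^{2n}$) with $f(P_rw)=Q_rf(w)$ for all $w\in\mathbb C^n$, $r\in I$, if and only if there exists an invertible $\mathbb R$-linear map $L\colon\mathbb C^n\to\mathbb C^n$, $L(w)=Mw+N\overline w$ with $M,N$ complex $n\times n$ matrices, such that $L(P_rw)=Q_rL(w)$ for all $w\in\mathbb C^n$, $r\in I$. *)

From mathcomp Require Import all_boot.
From Stdlib Require Import Reals.

Set Implicit Arguments.
Unset Strict Implicit.
Unset Printing Implicit Defensive.

Local Open Scope R_scope.

Record cpx := Cx { cre : R ; cim : R }.

Definition c0 : cpx := Cx 0 0.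
Definition c1 : cpx := Cx 1 0.
Definition cadd (a b : cpx) : cpx := Cx (cre a + cre b) (cim a + cim b).
Definition copp (a : cpx) : cpx := Cx (- cre a) (- cim a).
Definition cmul (a b : cpx) : cpx :=
  Cx (cre a * cre b - cim a * cim b) (cre a * cim b + cim a * cre b).
Definition cconj (a : cpx) : cpx := Cx (cre a) (- cim a).
Definition cscale (t : R) (a : cpx) : cpx := Cx (t * cre a) (t * cim a).
Definition cnorm2 (a : cpx) : R := cre a * cre a + cim a * cim a.

Definition cvec (n : nat) := 'I_n -> cpx.
Definition cmat (n : nat) := 'I_n -> 'I_n -> cpx.

Definition vadd n (v w : cvec n) : cvec n := fun i => cadd (v i) (w i).
Definition vsub n (v w : cvec n) : cvec n := fun i => cadd (v i) (copp (w i)).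
Definition vscale n (t : R) (v : cvec n) : cvec n := fun i => cscale t (v i).
Definition vconj n (v : cvec n) : cvec n := fun i => cconj (v i).

Definition vnorm n (v : cvec n) : R := sqrt (\big[Rplus/0]_(i < n) cnorm2 (v i)).

Definition mulmv n (M : cmat n) (w : cvec n) : cvec n :=
  fun i => \big[cadd/c0]_(j < n) cmul (M i j) (w j).
Definition mulmm n (A B : cmat n) : cmat n :=
  fun i k => \big[cadd/c0]_(j < n) cmul (A i j) (B j k).
Definition idm n : cmat n := fun i j => if i == j then c1 else c0.

Definition in_GL n (A : cmat n) : Prop :=
  exists B : cmat n, mulmm A B = @idm n /\ mulmm B A = @idm n.

Definition Rlinear n (T : cvec n -> cvec n) : Prop :=
  (forall v w, T (vadd v w) = vadd (T v) (T w)) /\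
  (forall (t : R) v, T (vscale t v) = vscale t (T v)).

Definition has_derivative n (f : cvec n -> cvec n) (Df : cvec n -> cvec n -> cvec n) :=
  forall x, Rlinear (Df x) /\
    forall eps, 0 < eps -> exists delta, 0 < delta /\
      forall h, vnorm h < delta ->
        vnorm (vsub (vsub (f (vadd x h)) (f x)) (Df x h)) <= eps * vnorm h.

Definition continuous_derivative n (Df : cvec n -> cvec n -> cvec n) :=
  forall x eps, 0 < eps -> exists delta, 0 < delta /\
    forall y, vnorm (vsub y x) < delta ->
      forall h, vnorm (vsub (Df y h) (Df x h)) <= eps * vnorm h.

Definition C1 n (f : cvec n -> cvec n) : Prop :=
  exists Df, has_derivative f Df /\ continuous_derivative Df.

Definition C1_diffeo n (f : cvec n -> cvec n) : Prop :=
  exists g : cvec n -> cvec n,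
    (forall w, g (f w) = w) /\ (forall w, f (g w) = w) /\ C1 f /\ C1 g.

Definition MNmap n (M N : cmat n) (w : cvec n) : cvec n :=
  vadd (mulmv M w) (mulmv N (vconj w)).

(* invertibility of a map (for the R-linear maps above, this is invertibility
   as an R-linear map, since the inverse of a linear bijection is linear) *)
Definition invertible_map n (L : cvec n -> cvec n) : Prop :=
  exists G : cvec n -> cvec n, (forall w, G (L w) = w) /\ (forall w, L (G w) = w).

(* If f is an equivariant C^1 diffeomorphism, its derivative A = Df(0) at the
   origin is the required map.  The chain rule applied to g o f = id and
   f o g = id makes A invertible, and applied to both sides of
   f o P_r = Q_r o f (the origin is fixed by P_r) gives A o P_r = Q_r o A.
   Every R-linear map of C^n has the form w |-> M w + N conj(w).  Conversely
   an invertible R-linear map is its own derivative everywhere, hence a C^1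
   diffeomorphism. *)

From Pilot Require Import Defs.
From mathcomp Require Import all_boot.
From Stdlib Require Import Reals Lra Psatz FunctionalExtensionality.
From HB Require Import structures.

Set Implicit Arguments.
Unset Strict Implicit.
Unset Printing Implicit Defensive.

Local Open Scope R_scope.

Lemma cpx_eq (a b : cpx) : cre a = cre b -> cim a = cim b -> a = b.
Proof. by case: a; case: b => /= ? ? ? ? -> ->. Qed.

Lemma caddA : associative cadd.
Proof. by move=> a b c; apply: cpx_eq => /=; ring. Qed.

Lemma caddC : commutative cadd.
Proof. by move=> a b; apply: cpx_eq => /=; ring. Qed.

Lemma add0c : left_id c0 cadd.
Proof. by move=> a; apply: cpx_eq => /=; ring. Qed.

Lemma RplusA : associative Rplus.
Proof. by move=> a b c; ring. Qed.

HB.instance Definition _ :=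
  Monoid.isComLaw.Build R 0 Rplus RplusA Rplus_comm Rplus_0_l.
HB.instance Definition _ := Monoid.isComLaw.Build cpx c0 cadd caddA caddC add0c.

Definition vzero n : cvec n := fun _ => c0.

Lemma cvec_eq n (v w : cvec n) :
  (forall i, cre (v i) = cre (w i)) -> (forall i, cim (v i) = cim (w i)) -> v = w.
Proof. by move=> Hre Him; apply: functional_extensionality => i; apply: cpx_eq. Qed.

Lemma vaddA n : associative (@vadd n).
Proof. by move=> u v w; apply: cvec_eq => i /=; ring. Qed.

Lemma vaddC n : commutative (@vadd n).
Proof. by move=> v w; apply: cvec_eq => i /=; ring. Qed.

Lemma add0v n : left_id (@vzero n) (@vadd n).
Proof. by move=> v; apply: cvec_eq => i /=; ring. Qed.

HB.instance Definition _ n :=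
  Monoid.isComLaw.Build (cvec n) (@vzero n) (@vadd n) (@vaddA n) (@vaddC n) (@add0v n).

Lemma vsumE n (J : finType) (F : J -> cvec n) i :
  (\big[@vadd n/@vzero n]_j F j) i = \big[cadd/c0]_j F j i.
Proof. exact: (big_morph (fun v : cvec n => v i)). Qed.

Lemma vaddsubK n (v w : cvec n) : vadd v (vsub w v) = w.
Proof. by apply: cvec_eq => i /=; ring. Qed.

Lemma vsubv n (v : cvec n) : vsub v v = @vzero n.
Proof. by apply: cvec_eq => i /=; ring. Qed.

Lemma vsub_scale n t (v w : cvec n) :
  vsub (vscale t v) (vscale t w) = vscale t (vsub v w).
Proof. by apply: cvec_eq => i /=; ring. Qed.

Section RealSums.
Variable J : finType.
Implicit Types F G : J -> R.

Lemma ler_Rsum F G : (forall j, F j <= G j) ->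
  \big[Rplus/0]_j F j <= \big[Rplus/0]_j G j.
Proof. by move=> H; apply: (big_ind2 (fun a b => a <= b)) => *; [lra|lra|]. Qed.

Lemma Rsum_ge0 F : (forall j, 0 <= F j) -> 0 <= \big[Rplus/0]_j F j.
Proof. by move=> H; apply: (big_ind (fun a => 0 <= a)) => *; [lra|lra|]. Qed.

Lemma Rsum_mull c F : \big[Rplus/0]_j (c * F j) = c * \big[Rplus/0]_j F j.
Proof. by apply: (big_ind2 (fun a b => a = c * b)) => *; subst; ring. Qed.

Lemma ler_Rsum_term F j : (forall k, 0 <= F k) -> F j <= \big[Rplus/0]_k F k.
Proof.
move=> H; rewrite (bigD1 j) //=.
have : 0 <= \big[Rplus/0]_(k | k != j) F k.
  by apply: (big_ind (fun a => 0 <= a)) => *; [lra|lra|].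
lra.
Qed.

End RealSums.

Lemma Rsum_const n c : \big[Rplus/0]_(i < n) c = INR n * c.
Proof.
elim: n => [|k IH]; first by rewrite big_ord0 /=; ring.
by rewrite big_ord_recr /= IH; case: k {IH} => [|k] /=; ring.
Qed.

(* Estimates use the l^1 norm of R^(2n): it is equivalent to vnorm, and its
   triangle inequality is coordinatewise. *)
Definition norm1 n (v : cvec n) : R :=
  \big[Rplus/0]_(i < n) (Rabs (cre (v i)) + Rabs (cim (v i))).

Section Norm1.
Variable n : nat.
Implicit Types u v w : cvec n.

Lemma coord_abs_ge0 v i : 0 <= Rabs (cre (v i)) + Rabs (cim (v i)).
Proof. by have := Rabs_pos (cre (v i)); have := Rabs_pos (cim (v i)); lra. Qed.

Lemma norm1_ge0 v : 0 <= norm1 v.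
Proof. exact: Rsum_ge0 (coord_abs_ge0 v). Qed.

Lemma coord_le_norm1 v i : Rabs (cre (v i)) + Rabs (cim (v i)) <= norm1 v.
Proof.
exact: (@ler_Rsum_term _ (fun i => Rabs (cre (v i)) + Rabs (cim (v i))) i
          (coord_abs_ge0 v)).
Qed.

Lemma norm1_vzero : norm1 (@vzero n) = 0.
Proof. by rewrite /norm1 big1 // => i _ /=; rewrite Rabs_R0; ring. Qed.

Lemma norm1_eq0 v : norm1 v <= 0 -> v = @vzero n.
Proof.
move=> Hv; apply: cvec_eq => i /=; have := coord_le_norm1 v i;
  have := Rabs_pos (cre (v i)); have := Rabs_pos (cim (v i));
  rewrite /Rabs; do 2!case: Rcase_abs; lra.
Qed.

Lemma norm1_le_coordwise u v w :
  (forall i, Rabs (cre (u i)) <= Rabs (cre (v i)) + Rabs (cre (w i))) ->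
  (forall i, Rabs (cim (u i)) <= Rabs (cim (v i)) + Rabs (cim (w i))) ->
  norm1 u <= norm1 v + norm1 w.
Proof.
move=> Hre Him; rewrite /norm1 -big_split /=.
by apply: ler_Rsum => i; have := Hre i; have := Him i; lra.
Qed.

Lemma norm1_add v w : norm1 (vadd v w) <= norm1 v + norm1 w.
Proof. by apply: norm1_le_coordwise => i /=; apply: Rabs_triang. Qed.

Lemma norm1_sub_triangle u v w :
  norm1 (vsub u v) <= norm1 (vsub w v) + norm1 (vsub w u).
Proof.
by apply: norm1_le_coordwise => i /=; rewrite /Rabs; do 3!case: Rcase_abs; lra.
Qed.

Lemma norm1_scale t v : norm1 (vscale t v) = Rabs t * norm1 v.
Proof. by rewrite /norm1 -Rsum_mull; apply: eq_bigr => i _ /=; rewrite !Rabs_mult; ring. Qed.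

Lemma norm1_sum (F : 'I_n -> cvec n) :
  norm1 (\big[@vadd n/@vzero n]_j F j) <= \big[Rplus/0]_j norm1 (F j).
Proof.
apply: (big_ind2 (fun v r => norm1 v <= r)) => [|v1 r1 v2 r2 H1 H2|j _].
- by rewrite norm1_vzero; lra.
- by have := norm1_add v1 v2; lra.
- lra.
Qed.

Lemma vnorm_ge0 v : 0 <= vnorm v.
Proof. exact: sqrt_pos. Qed.

Lemma vnorm_vzero : vnorm (@vzero n) = 0.
Proof. by rewrite /vnorm big1 ?sqrt_0 // => i _; rewrite /cnorm2 /=; ring. Qed.

Lemma vnorm_le_norm1 v : vnorm v <= norm1 v.
Proof.
apply: Rsqr_incr_0_var; last exact: norm1_ge0.
rewrite Rsqr_sqrt; last by apply: Rsum_ge0 => i; rewrite /cnorm2; nra.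
rewrite /Rsqr /norm1.
apply (big_ind2 (fun a b => 0 <= b /\ a <= b * b)).
- lra.
- by move=> a1 b1 a2 b2 [? ?] [? ?]; split; nra.
- move=> i _; rewrite /cnorm2; have := Rabs_pos (cre (v i)); have := Rabs_pos (cim (v i)).
  have := Rsqr_abs (cre (v i)); have := Rsqr_abs (cim (v i)); rewrite /Rsqr.
  by split; nra.
Qed.

Lemma coord_le_vnorm v i :
  Rabs (cre (v i)) <= vnorm v /\ Rabs (cim (v i)) <= vnorm v.
Proof.
have Hi : cnorm2 (v i) <= \big[Rplus/0]_(j < n) cnorm2 (v j).
  by apply: (@ler_Rsum_term _ (fun j => cnorm2 (v j))) => j; rewrite /cnorm2; nra.
rewrite /vnorm -!sqrt_Rsqr_abs /Rsqr /cnorm2 in Hi *.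
by split; apply: sqrt_le_1_alt; nra.
Qed.

Lemma norm1_le_vnorm v : norm1 v <= 2 * INR n * vnorm v.
Proof.
have -> : 2 * INR n * vnorm v = \big[Rplus/0]_(i < n) (2 * vnorm v).
  by rewrite Rsum_const; ring.
by apply: ler_Rsum => i; have := coord_le_vnorm v i; lra.
Qed.

End Norm1.

Section LinearMap.
Variables (n : nat) (T : cvec n -> cvec n).
Hypothesis linT : Rlinear T.

Lemma linearD v w : T (vadd v w) = vadd (T v) (T w).
Proof. exact: linT.1. Qed.

Lemma linearZ t v : T (vscale t v) = vscale t (T v).
Proof. exact: linT.2. Qed.

Lemma linear0 : T (@vzero n) = @vzero n.
Proof.
have -> : @vzero n = vscale 0 (@vzero n) by apply: cvec_eq => i /=; ring.
by rewrite linearZ; apply: cvec_eq => i /=; ring.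
Qed.

Lemma linearB v w : T (vsub v w) = vsub (T v) (T w).
Proof.
have E u u' : vsub u u' = vadd u (vscale (-1) u') by apply: cvec_eq => i /=; ring.
by rewrite !E linearD linearZ.
Qed.

Lemma linear_sum (F : 'I_n -> cvec n) :
  T (\big[@vadd n/@vzero n]_j F j) = \big[@vadd n/@vzero n]_j T (F j).
Proof. by apply: big_morph; [exact: linearD | exact: linear0]. Qed.

End LinearMap.

Lemma linear_id n : Rlinear (fun v : cvec n => v).
Proof. by []. Qed.

Lemma linear_comp n (S T : cvec n -> cvec n) :
  Rlinear S -> Rlinear T -> Rlinear (fun v => S (T v)).
Proof.
move=> linS linT; split=> *.
- by rewrite (linearD linT) (linearD linS).
- by rewrite (linearZ linT) (linearZ linS).
Qed.

Lemma mulmv_linear n (P : cmat n) : Rlinear (mulmv P).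
Proof.
split=> [v w | t v]; apply: functional_extensionality => i.
- rewrite /mulmv /vadd -big_split /=.
  by apply: eq_bigr => j _; apply: cpx_eq => /=; ring.
- rewrite /mulmv /vscale (big_morph (cscale t) (id1 := c0) (op1 := cadd)).
  + by apply: eq_bigr => j _; apply: cpx_eq => /=; ring.
  + by move=> a b; apply: cpx_eq => /=; ring.
  + by apply: cpx_eq => /=; ring.
Qed.

Lemma MNmap_linear n (M N : cmat n) : Rlinear (MNmap M N).
Proof.
have [MD MZ] := mulmv_linear M; have [ND NZ] := mulmv_linear N.
split=> [v w | t v]; rewrite /MNmap.
- have -> : vconj (vadd v w) = vadd (vconj v) (vconj w) by apply: cvec_eq => i /=; ring.
  by rewrite MD ND; apply: cvec_eq => i /=; ring.
- have -> : vconj (vscale t v) = vscale t (vconj v) by apply: cvec_eq => i /=; ring.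
  by rewrite MZ NZ; apply: cvec_eq => i /=; ring.
Qed.

Definition e_re n (j : 'I_n) : cvec n := fun i => if i == j then Defs.c1 else c0.
Definition e_im n (j : 'I_n) : cvec n := fun i => if i == j then Cx 0 1 else c0.

Lemma cvec_decomp n (v : cvec n) :
  v = \big[@vadd n/@vzero n]_j
        vadd (vscale (cre (v j)) (e_re j)) (vscale (cim (v j)) (e_im j)).
Proof.
apply: functional_extensionality => i; rewrite vsumE (bigD1 i) //= big1.
- by rewrite /vadd /vscale /e_re /e_im eqxx; apply: cpx_eq => /=; ring.
- move=> j /negbTE Hj; rewrite /e_re /e_im /vadd /vscale eq_sym Hj.
  by apply: cpx_eq => /=; ring.
Qed.

Lemma linear_norm1_bounded n (T : cvec n -> cvec n) : Rlinear T ->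
  exists C, 0 <= C /\ forall v, norm1 (T v) <= C * norm1 v.
Proof.
move=> linT; exists (\big[Rplus/0]_(j < n) (norm1 (T (e_re j)) + norm1 (T (e_im j)))).
split.
  by apply: Rsum_ge0 => j; have := norm1_ge0 (T (e_re j)); have := norm1_ge0 (T (e_im j)); lra.
move=> v; rewrite {1}(cvec_decomp v) (linear_sum linT) Rmult_comm -Rsum_mull.
apply: Rle_trans (norm1_sum _) _; apply: ler_Rsum => j.
rewrite (linearD linT) !(linearZ linT); apply: Rle_trans (norm1_add _ _) _.
rewrite !norm1_scale; have := coord_le_norm1 v j.
have := Rabs_pos (cre (v j)); have := Rabs_pos (cim (v j)).
by have := norm1_ge0 (T (e_re j)); have := norm1_ge0 (T (e_im j)); nra.
Qed.

(* Comparing T w = M w + N conj(w) at w = e_j and w = i e_j gives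
   M e_j + N e_j = T e_j and i (M e_j - N e_j) = T (i e_j). *)
Lemma linear_MNmap_repr n (T : cvec n -> cvec n) : Rlinear T ->
  exists M N : cmat n, forall w, MNmap M N w = T w.
Proof.
move=> linT.
exists (fun i j => cscale (/2) (cadd (T (e_re j) i) (cmul (Cx 0 (-1)) (T (e_im j) i)))).
exists (fun i j => cscale (/2) (cadd (T (e_re j) i) (cmul (Cx 0 1) (T (e_im j) i)))).
move=> w; rewrite {2}(cvec_decomp w) (linear_sum linT).
apply: functional_extensionality => i.
rewrite vsumE /MNmap /vadd /mulmv -big_split /=; apply: eq_bigr => j _.
rewrite (linearD linT) !(linearZ linT) /vadd /vscale /vconj.
by apply: cpx_eq => /=; field.
Qed.

Lemma linear_inverse_linear n (T G : cvec n -> cvec n) : Rlinear T ->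
  (forall w, G (T w) = w) -> (forall w, T (G w) = w) -> Rlinear G.
Proof.
move=> linT GT TG; split=> [v w | t v].
- by rewrite -{1}(TG v) -{1}(TG w) -(linearD linT) GT.
- by rewrite -{1}(TG v) -(linearZ linT) GT.
Qed.

Definition tangent n (phi T : cvec n -> cvec n) :=
  forall eps, 0 < eps -> exists delta, 0 < delta /\
    forall h, norm1 h < delta -> norm1 (vsub (phi h) (T h)) <= eps * norm1 h.

Definition diff_at n (f A : cvec n -> cvec n) x :=
  tangent (fun h => vsub (f (vadd x h)) (f x)) A.

Lemma tangent_scaled n (phi T : cvec n -> cvec n) C : 0 < C ->
  (forall eps, 0 < eps -> exists delta, 0 < delta /\
     forall h, norm1 h < delta -> norm1 (vsub (phi h) (T h)) <= C * eps * norm1 h) ->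
  tangent phi T.
Proof.
move=> C0 H eps eps0; have [d [d0 Hd]] := H (eps / C) (Rdiv_lt_0_compat _ _ eps0 C0).
exists d; split=> // h /Hd; have -> : C * (eps / C) = eps by field; lra.
by [].
Qed.

Lemma tangent_linear_uniq n (phi T1 T2 : cvec n -> cvec n) :
  Rlinear T1 -> Rlinear T2 -> tangent phi T1 -> tangent phi T2 ->
  forall h, T1 h = T2 h.
Proof.
move=> lin1 lin2 tan1 tan2 h.
suff : norm1 (vsub (T1 h) (T2 h)) <= 0.
  by move/norm1_eq0 => E; apply: cvec_eq => i;
     have := f_equal (fun v => cre (v i)) E; have := f_equal (fun v => cim (v i)) E;
     rewrite /= => ? ?; lra.
apply: Rle_plus_epsilon => e e0.
have Nh := norm1_ge0 h.
set eps := e / (2 * (norm1 h + 1)).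
have eps0 : 0 < eps by apply: Rdiv_lt_0_compat; lra.
have [d1 [d10 H1]] := tan1 eps eps0; have [d2 [d20 H2]] := tan2 eps eps0.
have m0 := Rmin_pos _ _ d10 d20.
set t := Rmin d1 d2 / (2 * (norm1 h + 1)).
have t0 : 0 < t by apply: Rdiv_lt_0_compat; lra.
have Nth : norm1 (vscale t h) = t * norm1 h by rewrite norm1_scale Rabs_pos_eq; lra.
have small_th : norm1 (vscale t h) < Rmin d1 d2.
  have : t * (2 * (norm1 h + 1)) = Rmin d1 d2 by rewrite /t; field; lra.
  by nra.
have E1 := H1 _ (Rlt_le_trans _ _ _ small_th (Rmin_l d1 d2)).
have E2 := H2 _ (Rlt_le_trans _ _ _ small_th (Rmin_r d1 d2)).
have := norm1_sub_triangle (T1 (vscale t h)) (T2 (vscale t h)) (phi (vscale t h)).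
rewrite (linearZ lin1) (linearZ lin2) vsub_scale norm1_scale Rabs_pos_eq; last lra.
move=> Etri.
have : norm1 (vsub (T1 h) (T2 h)) <= 2 * eps * norm1 h.
  apply: (Rmult_le_reg_l t) => //.
  by rewrite (linearZ lin1) (linearZ lin2) Nth in E1 E2; lra.
have : 2 * eps * norm1 h <= e.
  have -> : 2 * eps * norm1 h = e * (norm1 h / (norm1 h + 1)) by rewrite /eps; field; lra.
  have : norm1 h / (norm1 h + 1) <= 1.
    by apply: (Rmult_le_reg_r (norm1 h + 1)); [lra | field_simplify; lra].
  by nra.
lra.
Qed.

Lemma diff_at_of_has_derivative n (f : cvec n -> cvec n) Df :
  has_derivative f Df -> forall x, Rlinear (Df x) /\ diff_at f (Df x) x.
Proof.
move=> Hf x; have [linDf Hd] := Hf x; split=> //.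
have n0 := pos_INR n.
apply: (@tangent_scaled _ _ _ (2 * INR n + 1)); first lra.
move=> eps eps0; have [d [d0 Hdx]] := Hd eps eps0.
exists d; split=> // h Hh /=.
set r := vsub (vsub (f (vadd x h)) (f x)) (Df x h).
have Hv := vnorm_le_norm1 h.
have Hr : vnorm r <= eps * vnorm h by apply: Hdx; lra.
have := norm1_le_vnorm r; have := vnorm_ge0 h; have := vnorm_ge0 r.
have : 2 * INR n * vnorm r <= 2 * INR n * (eps * vnorm h) by apply: Rmult_le_compat_l; lra.
have : 2 * INR n * (eps * vnorm h) <= 2 * INR n * (eps * norm1 h).
  by apply: Rmult_le_compat_l; nra.
have := norm1_ge0 h; nra.
Qed.

Lemma diff_at_linear n (T : cvec n -> cvec n) x : Rlinear T -> diff_at T T x.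
Proof.
move=> linT eps eps0; exists 1; split=> [|h _]; first lra.
rewrite /= (linearD linT).
have -> : vsub (vsub (vadd (T x) (T h)) (T x)) (T h) = @vzero n.
  by apply: cvec_eq => i /=; ring.
by rewrite norm1_vzero; have := norm1_ge0 h; nra.
Qed.

Lemma diff_at_increment_bound n (f A : cvec n -> cvec n) x :
  Rlinear A -> diff_at f A x ->
  exists K delta, 0 < K /\ 0 < delta /\
    forall h, norm1 h < delta -> norm1 (vsub (f (vadd x h)) (f x)) <= K * norm1 h.
Proof.
move=> linA Df; have [C [C0 HC]] := linear_norm1_bounded linA.
have [d [d0 Hd]] := Df 1 Rlt_0_1.
exists (C + 1), d; split; [lra | split=> // h /Hd /= Hh].
rewrite -(vaddsubK (A h) (vsub _ _)); apply: Rle_trans (norm1_add _ _) _.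
by have := HC h; lra.
Qed.

Lemma diff_at_comp n (f g A B : cvec n -> cvec n) x :
  Rlinear A -> Rlinear B -> diff_at f A x -> diff_at g B (f x) ->
  diff_at (fun w => g (f w)) (fun h => B (A h)) x.
Proof.
move=> linA linB Df Dg.
have [K [d0 [K0 [d00 Hinc]]]] := diff_at_increment_bound linA Df.
have [CB [CB0 HB]] := linear_norm1_bounded linB.
apply: (@tangent_scaled _ _ _ (K + CB)); first lra.
move=> eps eps0; have [df [df0 Hf]] := Df eps eps0; have [dg [dg0 Hg]] := Dg eps eps0.
have dgK0 : 0 < dg / K by apply: Rdiv_lt_0_compat.
exists (Rmin d0 (Rmin df (dg / K))); split; first by do 2?apply: Rmin_pos.
move=> h Hh; have := Rmin_l d0 (Rmin df (dg / K)); have := Rmin_r d0 (Rmin df (dg / K)).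
have := Rmin_l df (dg / K); have := Rmin_r df (dg / K); move=> ? ? ? ?.
have Nh := norm1_ge0 h.
set k := vsub (f (vadd x h)) (f x).
have Nk : norm1 k <= K * norm1 h by apply: Hinc; lra.
have Nk_dg : norm1 k < dg.
  have : K * (dg / K) = dg by field; lra.
  by nra.
have Eg := Hg k Nk_dg; rewrite /= vaddsubK in Eg.
have Ef : norm1 (vsub k (A h)) <= eps * norm1 h by apply: Hf; lra.
have EB := HB (vsub k (A h)); rewrite (linearB linB) in EB.
have -> : vsub (vsub (g (f (vadd x h))) (g (f x))) (B (A h))
        = vadd (vsub (vsub (g (f (vadd x h))) (g (f x))) (B k)) (vsub (B k) (B (A h))).
  by apply: cvec_eq => i /=; ring.
apply: Rle_trans (norm1_add _ _) _.
by have := norm1_ge0 k; nra.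
Qed.

Lemma diff_at_left_inverse n (f g A B : cvec n -> cvec n) x :
  (forall w, g (f w) = w) -> Rlinear A -> Rlinear B ->
  diff_at f A x -> diff_at g B (f x) -> forall h, B (A h) = h.
Proof.
move=> gf linA linB Df Dg.
have := diff_at_comp linA linB Df Dg.
have -> : (fun w => g (f w)) = (fun w => w) by apply: functional_extensionality.
move/tangent_linear_uniq; apply; [exact: linear_comp | exact: linear_id |].
exact: diff_at_linear (linear_id n).
Qed.

Lemma diff_at0_intertwines n (f A S T : cvec n -> cvec n) :
  Rlinear S -> Rlinear T -> (forall w, f (S w) = T (f w)) ->
  Rlinear A -> diff_at f A (@vzero n) -> forall h, A (S h) = T (A h).
Proof.
move=> linS linT fST linA Df.
have DfS : diff_at f A (S (@vzero n)) by rewrite (linear0 linS).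
have := diff_at_comp linS linA (diff_at_linear _ linS) DfS.
have -> : (fun w => f (S w)) = (fun w => T (f w)) by apply: functional_extensionality.
move/tangent_linear_uniq; apply; [exact: linear_comp | exact: linear_comp |].
exact: diff_at_comp linA linT Df (diff_at_linear _ linT).
Qed.

Lemma linear_C1 n (T : cvec n -> cvec n) : Rlinear T -> Defs.C1 T.
Proof.
move=> linT; exists (fun _ => T); split=> [x | x eps eps0].
- split=> // eps eps0; exists 1; split=> [|h _]; first lra.
  have -> : vsub (vsub (T (vadd x h)) (T x)) (T h) = @vzero n.
    by rewrite (linearD linT); apply: cvec_eq => i /=; ring.
  by rewrite vnorm_vzero; have := vnorm_ge0 h; nra.
- exists 1; split=> [|y _ h]; first lra.
  by rewrite vsubv vnorm_vzero; have := vnorm_ge0 h; nra.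
Qed.

Theorem theorem3p4 (n : nat) (I : Type) (P Q : I -> cmat n)
  (hP : forall r, in_GL (P r)) (hQ : forall r, in_GL (Q r)) :
  (exists f : cvec n -> cvec n, C1_diffeo f /\
     forall r w, f (mulmv (P r) w) = mulmv (Q r) (f w))
  <->
  (exists M N : cmat n, invertible_map (MNmap M N) /\
     forall r w, MNmap M N (mulmv (P r) w) = mulmv (Q r) (MNmap M N w)).
Proof.
split.
- move=> [f [[g [gf [fg [[Df [Hf _]] [Dg [Hg _]]]]]] f_conj]].
  have [linA DA] := diff_at_of_has_derivative Hf (@vzero n).
  have [linB DB] := diff_at_of_has_derivative Hg (f (@vzero n)).
  have [linA' DA'] := diff_at_of_has_derivative Hf (g (f (@vzero n))).
  have AB := diff_at_left_inverse fg linB linA' DB DA'; rewrite gf in AB.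
  have [M [N HMN]] := linear_MNmap_repr linA.
  exists M, N; split.
  + exists (Dg (f (@vzero n))); split=> w; rewrite HMN //.
    exact: diff_at_left_inverse gf linA linB DA DB w.
  + move=> r w; rewrite !HMN.
    exact: diff_at0_intertwines (mulmv_linear _) (mulmv_linear _) (f_conj r) linA DA w.
- move=> [M [N [[G [GL LG]] L_conj]]].
  have linL := MNmap_linear M N.
  exists (MNmap M N); split=> //.
  exists G; do 2!split=> //; split; apply: linear_C1 => //.
  exact: linear_inverse_linear linL GL LG.
Qed.
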